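(* Let $n,m,k_1,\ldots,k_r\ge 0$ be integers and let $u_1,\ldots,u_r\in F$ be evaluations at $(C_1,C_2)$ of left normed commutators of the form $[t_1,t_2,t_{j_3},\ldots,t_{j_l}]$ ($j_s\in\{1,2\}$, degree $l\ge 2$). Let $f=C_1^nC_2^mu_1^{k_1}\cdots u_r^{k_r}\in F$. Then $f$ is central in $F$ if and only if $k_1+\cdots+k_r\ge 2$, or else $m=n=k_1=\cdots=k_r=0$.
   Context: $K$ is an infinite field of characteristic different from 2. Let $X=\{x_1,x_2,x_1',x_2'\}$ and $Y=\{y_1,y_2,y_1',y_2'\}$, and let $K[X;Y]\cong K[X]\otimes_K E(Y)$ be the free supercommutative algebra: the $x$'s are even commuting variables, the $y$'s are odd pairwise anticommuting variables, and $E(Y)$ is the Grassmann algebra on the vector space with basis $Y$. Put $C_1=\begin{pmatrix} x_1&y_1\\ y_1'&x_1'\end{pmatrix}$, $C_2=\begin{pmatrix} x_2&y_2\\ y_2'&x_2'\end{pmatrix}$, and let $F=K[C_1,C_2]$ be the unital $K$-subalgebra of $M_2(K[X;Y])$ generated by $C_1,C_2$. Commutators are $[a,b]=ab-ba$, left normed: $[a_1,\ldots,a_k]=[[a_1,\ldots,a_{k-1}],a_k]$; $t_1,t_2$ are free noncommuting variables. *)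

From HB Require Import structures.
From mathcomp Require Import all_boot all_order all_algebra.
From mathcomp Require Import mpoly.
Set Implicit Arguments. Unset Strict Implicit. Unset Printing Implicit Defensive.
Import GRing.Theory.
Local Open Scope ring_scope.

(* Even part: the polynomial ring K[X] = K[x1,x2,x1',x2'], variables
   'X_0 = x1, 'X_1 = x2, 'X_2 = x1', 'X_3 = x2'.                          *)
Definition KX (K : fieldType) := {mpoly K[4]}.

(* The free supercommutative algebra K[X;Y] = K[X] (x) E(Y), with
   Y = {y1,y2,y1',y2'} (indices 0,1,2,3), is realized faithfully through
   its left regular representation on itself: K[X;Y] is a free K[X]-module
   with basis e_S (S subset of {0,1,2,3}, encoded by the bits of a : 'I_16),
   and every element acts by left multiplication.  This gives an injective
   K-algebra morphism K[X;Y] -> SA K := 16x16 matrices over K[X].          *)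
Definition SA (K : fieldType) := 'M[KX K]_16.

Definition bitI (a : nat) (i : nat) : bool := odd (a %/ 2 ^ i).

(* left multiplication by the odd generator y_i:
   y_i * e_S = (-1)^#{j in S | j < i} e_(S u {i}) if i \notin S, else 0 *)
Definition yv (K : fieldType) (i : 'I_4) : SA K :=
  \matrix_(a < 16, b < 16)
    (if (~~ bitI b i) && (a == b + 2 ^ i :> nat)
     then (-1) ^+ (count (fun j => bitI b j) (iota 0 i)) else 0).

Definition xv (K : fieldType) (i : 'I_4) : SA K := ('X_i : KX K)%:M.

Definition scal (K : fieldType) (c : K) : 'M[SA K]_2 :=
  ((c%:MP : KX K)%:M : SA K)%:M.

(* C_1 = [[x1, y1], [y1', x1']]  (j = false),
   C_2 = [[x2, y2], [y2', x2']]  (j = true)                                *)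
Definition Cgen (K : fieldType) (j : bool) : 'M[SA K]_2 :=
  let o := if j then 1%N else 0%N in
  \matrix_(p < 2, q < 2)
    (if (p == 0 :> nat) && (q == 0 :> nat) then xv K (inord o)
     else if (p == 0 :> nat) then yv K (inord o)
     else if (q == 0 :> nat) then yv K (inord (o + 2))
     else xv K (inord (o + 2))).

Definition C1 (K : fieldType) := Cgen K false.
Definition C2 (K : fieldType) := Cgen K true.

Definition comm (R : ringType) (a b : R) := a * b - b * a.

Definition inF (K : fieldType) (g : 'M[SA K]_2) : Prop :=
  exists s : seq (K * seq bool),
    g = \sum_(p <- s) scal p.1 * \prod_(b <- p.2) Cgen K b.

Definition centralF (K : fieldType) (f : 'M[SA K]_2) : Prop :=
  forall g, inF g -> f * g = g * f.

(* evaluation at (C1,C2) of the left normed commutator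
   [t1, t2, t_{j3}, ..., t_{jl}]   with js = [j3; ...; jl]
   (false encodes index 1, true encodes index 2). *)
Definition lcomm (K : fieldType) (js : seq bool) : 'M[SA K]_2 :=
  foldl (fun a b => comm a (Cgen K b)) (comm (C1 K) (C2 K)) js.

(** The algebra K[X;Y] is realized faithfully as 16 x 16 matrices over K[X]
   (its left regular representation), which turns every identity in F into a
   finite computation.  Writing d_b := x_b - x_b', the commutators
   B := [C1, C2] and B_k := [B, C_k] have explicit closed forms, and
   [B_j, C_k] = d_j d_k B; hence every left normed commutator is a central scalar
   multiple of B or of some B_k.  A direct computation then shows that a product
   of two of these matrices commutes with C1 and C2 while a product of three
   vanishes.  So a product P of at least two commutators commutes with C1, C2
   and is annihilated by every commutator, and since [C1^n C2^m, C_b] lies in the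
   ideal generated by [C1, C2], the element C1^n C2^m P is central.

   Conversely, specialize x1 = x2 = 1, x1' = x2' = 0, which sends every d_b to 1,
   and compute modulo the Grassmann monomials of degree at least 2.  There the
   specialized generators are idempotent, so C1^n C2^m and C1^n C2^m u collapse
   to finitely many explicit matrices; in each case the coefficient of y1 in the
   upper right entry of the commutator with a suitable generator is +-1. *)

From Pilot Require Import Defs.
From mathcomp Require Import all_boot all_order all_algebra.
From mathcomp Require Import mpoly ring.
Set Implicit Arguments. Unset Strict Implicit. Unset Printing Implicit Defensive.
Import GRing.Theory.
Local Open Scope ring_scope.

(* A set S of odd variables, component i standing for y1, y2, y1', y2'
   (i = 0..3, as in Defs), i.e. the basis monomial e_S of E(Y) with its factors
   in increasing order; [gmono_of_nat] decodes the bit encoding used in Defs. *)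
Definition gmono := (bool * bool * bool * bool)%type.

Definition gmonos : seq gmono :=
 [:: (false, false, false, false); (true, false, false, false);
     (false, true, false, false); (true, true, false, false);
     (false, false, true, false); (true, false, true, false);
     (false, true, true, false); (true, true, true, false);
     (false, false, false, true); (true, false, false, true);
     (false, true, false, true); (true, true, false, true);
     (false, false, true, true); (true, false, true, true);
     (false, true, true, true); (true, true, true, true)].

Definition gsubset (d a : gmono) : bool :=
  let '(d0, d1, d2, d3) := d in let '(a0, a1, a2, a3) := a in
  [&& d0 ==> a0, d1 ==> a1, d2 ==> a2 & d3 ==> a3].

Definition gdiff (a d : gmono) : gmono :=
  let '(d0, d1, d2, d3) := d in let '(a0, a1, a2, a3) := a in
  (a0 && ~~ d0, a1 && ~~ d1, a2 && ~~ d2, a3 && ~~ d3).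

Definition gunion (a d : gmono) : gmono :=
  let '(d0, d1, d2, d3) := d in let '(a0, a1, a2, a3) := a in
  (a0 || d0, a1 || d1, a2 || d2, a3 || d3).

(* For disjoint d and e, e_d e_e = (-1)^(gsign d e) e_(d u e): the parity of
   the pairs i in d, j in e with j < i. *)
Definition gsign (d e : gmono) : bool :=
  let '(d0, d1, d2, d3) := d in let '(e0, e1, e2, e3) := e in
  (d1 && e0) (+) (d2 && e0) (+) (d2 && e1) (+) (d3 && e0) (+) (d3 && e1) (+) (d3 && e2).

(* Unlike [==], this equality test is unfolded by the [lazy] computations below. *)
Definition gmono_eqb (a b : gmono) : bool :=
  let '(a0, a1, a2, a3) := a in let '(b0, b1, b2, b3) := b in
  [&& Bool.eqb a0 b0, Bool.eqb a1 b1, Bool.eqb a2 b2 & Bool.eqb a3 b3].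

Definition gmono_of_nat (a : nat) : gmono := (odd a, odd a./2, odd a./2./2, odd a./2./2./2).

Definition nat_of_gmono (x : gmono) : nat :=
  let '(a0, a1, a2, a3) := x in (a0 + 2 * a1 + 4 * a2 + 8 * a3)%N.

Lemma nat_of_gmono_lt x : (nat_of_gmono x < 16)%N.
Proof. by case: x => [[[[] []] []] []]. Qed.

Lemma nat_of_gmonoK : cancel nat_of_gmono gmono_of_nat.
Proof. by case=> [[[[] []] []] []]. Qed.

Lemma gmono_of_natK a : (a < 16)%N -> nat_of_gmono (gmono_of_nat a) = a.
Proof. by case: a => [|[|[|[|[|[|[|[|[|[|[|[|[|[|[|[|a]]]]]]]]]]]]]]]]. Qed.

Lemma eq_gmono_of_ord (a b : 'I_16) : (gmono_of_nat a == gmono_of_nat b) = (a == b).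
Proof.
apply/eqP/eqP => [/(congr1 nat_of_gmono)|-> //].
by rewrite !gmono_of_natK // => /val_inj.
Qed.

Lemma gmono_eqbE a b : gmono_eqb a b = (a == b).
Proof. by case: a => [[[[] []] []] []]; case: b => [[[[] []] []] []]. Qed.

Definition g0 : gmono := (false, false, false, false).

Section Grassmann.
Variable R : comNzRingType.

Definition grass := gmono -> R.

Definition gsum (F : gmono -> R) : R := foldr (fun x acc => F x + acc) 0 gmonos.

Definition negif (s : bool) (x : R) : R := if s then - x else x.

Definition grass_mul (u v : grass) : grass := fun a =>
  gsum (fun d => if gsubset d a then negif (gsign d (gdiff a d)) (u d * v (gdiff a d)) else 0).

(* The coefficient of e_a in u e_b. *)
Definition lmul_coef (u : grass) (a b : gmono) : R :=
  if gsubset b a then negif (gsign (gdiff a b) b) (u (gdiff a b)) else 0.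

Definition lmul_mx (u : grass) : 'M[R]_16 :=
  \matrix_(a < 16, b < 16) lmul_coef u (gmono_of_nat a) (gmono_of_nat b).

Lemma sum_gmono_of_nat (F : gmono -> R) : \sum_(c < 16) F (gmono_of_nat c) = gsum F.
Proof. by rewrite !big_ord_recl big_ord0 /gsum /= addr0. Qed.

(* Associativity of E(Y): (u v) e_b = u (v e_b). *)
Lemma lmul_coefM (u v : grass) a b :
  gsum (fun c => lmul_coef u a c * lmul_coef v c b) = lmul_coef (grass_mul u v) a b.
Proof.
case: a => [[[[] []] []] []]; case: b => [[[[] []] []] []];
lazy beta iota zeta delta [gsum lmul_coef grass_mul negif gmonos gsubset gdiff gsign
  foldr implb andb negb addb]; ring.
Qed.

Lemma lmul_mxM (u v : grass) : lmul_mx u * lmul_mx v = lmul_mx (grass_mul u v).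
Proof.
apply/matrixP => a b; rewrite !mxE -lmul_coefM -sum_gmono_of_nat.
by apply: eq_bigr => c _; rewrite !mxE.
Qed.

Lemma eq_lmul_mx (u v : grass) : u =1 v -> lmul_mx u = lmul_mx v.
Proof. by move=> uv; apply/matrixP => a b; rewrite !mxE /lmul_coef uv. Qed.

Lemma lmul_mxD (u v : grass) : lmul_mx u + lmul_mx v = lmul_mx (fun a => u a + v a).
Proof.
apply/matrixP => a b; rewrite !mxE /lmul_coef /negif.
by case: ifP => _; [case: ifP => _; rewrite ?opprD | rewrite addr0].
Qed.

Lemma lmul_mxN (u : grass) : - lmul_mx u = lmul_mx (fun a => - u a).
Proof.
apply/matrixP => a b; rewrite !mxE /lmul_coef /negif.
by case: ifP => _; [case: ifP => _ | rewrite oppr0].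
Qed.

Lemma lmul_mxZ (c : R) (u : grass) : c%:M * lmul_mx u = lmul_mx (fun a => c * u a).
Proof.
rewrite -mulmxE mul_scalar_mx; apply/matrixP => a b; rewrite !mxE /lmul_coef /negif.
by case: ifP => _; [case: ifP => _; rewrite ?mulrN | rewrite mulr0].
Qed.

(* Column 0 of lmul_mx u lists the coefficients of u = u e_0. *)
Lemma lmul_mx_inj (u v : grass) : lmul_mx u = lmul_mx v -> u =1 v.
Proof.
move=> /matrixP uv x; have := uv (Ordinal (nat_of_gmono_lt x)) ord0.
by rewrite !mxE /= nat_of_gmonoK /lmul_coef; case: x {uv} => [[[[] []] []] []].
Qed.

End Grassmann.

Section Sparse.
Variable R : comNzRingType.

Definition oval (o : option R) : R := if o is Some x then x else 0.

Definition oadd (a b : option R) : option R :=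
  match a, b with None, _ => b | Some x, None => Some x | Some x, Some y => Some (x + y) end.

Definition omul (a b : option R) : option R :=
  match a, b with Some x, Some y => Some (x * y) | _, _ => None end.

Definition oopp (a : option R) : option R := if a is Some x then Some (- x) else None.

Definition osign (s : bool) (a : option R) : option R := if s then oopp a else a.

Lemma oval_add a b : oval (oadd a b) = oval a + oval b.
Proof. by case: a; case: b => //= *; rewrite ?add0r ?addr0. Qed.

Lemma oval_mul a b : oval (omul a b) = oval a * oval b.
Proof. by case: a; case: b => //= *; rewrite ?mul0r ?mulr0. Qed.

Lemma oval_opp a : oval (oopp a) = - oval a.
Proof. by case: a => //=; rewrite oppr0. Qed.

Lemma oval_sign s a : oval (osign s a) = negif s (oval a).
Proof. by case: s => //=; rewrite oval_opp. Qed.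

(* Sparse coefficient vectors: [None] is a structural zero, which keeps the
   normal forms computed by [lazy] small. *)
Definition sgrass := gmono -> option R.

Definition dense (u : sgrass) : grass R := fun a => oval (u a).

Definition sgrass_of (l : seq (gmono * R)) : sgrass := fun a =>
  foldr (fun p acc => if gmono_eqb a p.1 then oadd (Some p.2) acc else acc) None l.

Definition sgrass_add (u v : sgrass) : sgrass := fun a => oadd (u a) (v a).

Definition sgrass_opp (u : sgrass) : sgrass := fun a => oopp (u a).

Definition sgrass_scale (c : R) (u : sgrass) : sgrass := fun a => omul (Some c) (u a).

Definition sgrass_mul (u v : sgrass) : sgrass := fun a =>
  foldr (fun d acc =>
    oadd (if gsubset d a then osign (gsign d (gdiff a d)) (omul (u d) (v (gdiff a d))) else None)
      acc) None gmonos.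

Lemma dense_mul (u v : sgrass) : dense (sgrass_mul u v) =1 grass_mul (dense u) (dense v).
Proof.
move=> a; rewrite /dense /sgrass_mul /grass_mul /gsum; elim: gmonos => //= d l IH.
by rewrite oval_add IH; case: ifP => _ //=; rewrite ?oval_sign ?oval_mul ?add0r.
Qed.

Definition lmul_smx (u : sgrass) : 'M[R]_16 := lmul_mx (dense u).

Lemma lmul_smx_const (c : R) : lmul_smx (sgrass_of [:: (g0, c)]) = c%:M.
Proof.
apply/matrixP => a b; rewrite !mxE.
have -> : forall x y,
    lmul_coef (dense (sgrass_of [:: (g0, c)])) x y = if gmono_eqb x y then c else 0.
  case=> [[[[] []] []] []] [[[[] []] []] []];
  by rewrite /lmul_coef /dense /sgrass_of /= ?oppr0.
by rewrite gmono_eqbE eq_gmono_of_ord; case: eqP.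
Qed.

Lemma lmul_smxM (u v : sgrass) : lmul_smx u * lmul_smx v = lmul_smx (sgrass_mul u v).
Proof. by rewrite /lmul_smx lmul_mxM; apply: eq_lmul_mx => a; rewrite dense_mul. Qed.

Lemma lmul_smxD (u v : sgrass) : lmul_smx u + lmul_smx v = lmul_smx (sgrass_add u v).
Proof. by rewrite /lmul_smx lmul_mxD; apply: eq_lmul_mx => a; rewrite /dense oval_add. Qed.

Lemma lmul_smxN (u : sgrass) : - lmul_smx u = lmul_smx (sgrass_opp u).
Proof. by rewrite /lmul_smx lmul_mxN; apply: eq_lmul_mx => a; rewrite /dense oval_opp. Qed.

Lemma lmul_smxZ (c : R) (u : sgrass) : c%:M * lmul_smx u = lmul_smx (sgrass_scale c u).
Proof. by rewrite /lmul_smx lmul_mxZ; apply: eq_lmul_mx => a; rewrite /dense oval_mul. Qed.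

Lemma lmul_smx0 : lmul_smx (fun _ => None) = 0.
Proof. by apply/matrixP => a b; rewrite !mxE /lmul_coef /dense /negif oppr0 !if_same. Qed.


Definition all_gmonos (P : gmono -> Prop) : Prop := foldr (fun a Q => P a /\ Q) True gmonos.

Lemma all_gmonosP (P : gmono -> Prop) : all_gmonos P -> forall a, P a.
Proof. by rewrite /all_gmonos /= => HP [[[[] []] []] []]; tauto. Qed.

Record smx := Smx { s00 : sgrass; s01 : sgrass; s10 : sgrass; s11 : sgrass }.

Definition smx_entry (A : smx) (i j : nat) : sgrass :=
  match i, j with 0, 0 => s00 A | 0, _ => s01 A | _, 0 => s10 A | _, _ => s11 A end.

Definition smx_mx (A : smx) : 'M['M[R]_16]_2 :=
  \matrix_(i < 2, j < 2) lmul_smx (smx_entry A i j).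

Definition smx0 : smx := Smx (fun _ => None) (fun _ => None) (fun _ => None) (fun _ => None).

Definition smx1 : smx :=
  let e := sgrass_of [:: (g0, 1)] in Smx e (fun _ => None) (fun _ => None) e.

Definition smx_add (A B : smx) : smx :=
  Smx (sgrass_add (s00 A) (s00 B)) (sgrass_add (s01 A) (s01 B))
      (sgrass_add (s10 A) (s10 B)) (sgrass_add (s11 A) (s11 B)).

Definition smx_opp (A : smx) : smx :=
  Smx (sgrass_opp (s00 A)) (sgrass_opp (s01 A)) (sgrass_opp (s10 A)) (sgrass_opp (s11 A)).

Definition smx_scale (c : R) (A : smx) : smx :=
  Smx (sgrass_scale c (s00 A)) (sgrass_scale c (s01 A))
      (sgrass_scale c (s10 A)) (sgrass_scale c (s11 A)).

Definition smx_mul (A B : smx) : smx :=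
  Smx (sgrass_add (sgrass_mul (s00 A) (s00 B)) (sgrass_mul (s01 A) (s10 B)))
      (sgrass_add (sgrass_mul (s00 A) (s01 B)) (sgrass_mul (s01 A) (s11 B)))
      (sgrass_add (sgrass_mul (s10 A) (s00 B)) (sgrass_mul (s11 A) (s10 B)))
      (sgrass_add (sgrass_mul (s10 A) (s01 B)) (sgrass_mul (s11 A) (s11 B))).

Definition smx_comm (A B : smx) : smx := smx_add (smx_mul A B) (smx_opp (smx_mul B A)).

Definition smx_pow (A : smx) (n : nat) : smx := iter n (fun P => smx_mul P A) smx1.

Definition smx_eqv (A B : smx) : Prop := all_gmonos (fun a =>
  [/\ oval (s00 A a) = oval (s00 B a), oval (s01 A a) = oval (s01 B a),
      oval (s10 A a) = oval (s10 B a) & oval (s11 A a) = oval (s11 B a)]).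

Definition scal2 (c : R) : 'M['M[R]_16]_2 := (c%:M)%:M.

Lemma scal2_comm (c : R) (X : 'M['M[R]_16]_2) : GRing.comm (scal2 c) X.
Proof.
rewrite /GRing.comm /scal2 -!mulmxE mul_scalar_mx; apply/matrixP => i j; rewrite !mxE.
rewrite (bigD1 j) //= big1 ?addr0 => [|k /negbTE nkj]; last by rewrite !mxE nkj mulr0n mulr0.
by rewrite !mxE eqxx mulr1n -mulmxE scalar_mxC.
Qed.

Lemma scal2M (c d : R) : scal2 c * scal2 d = scal2 (c * d).
Proof. by rewrite /scal2 -mulmxE -scalar_mxM -mulmxE -scalar_mxM. Qed.

Lemma scal2_mulmx (c d : R) (X Y : 'M['M[R]_16]_2) :
  scal2 c * X * (scal2 d * Y) = scal2 (c * d) * (X * Y).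
Proof. by rewrite -scal2M -!mulrA; congr (_ * _); rewrite !mulrA scal2_comm. Qed.

Lemma scal2_1 : scal2 1 = 1.
Proof. by []. Qed.

Ltac entrywise := apply/matrixP => -[[|[|?]] ?] [[|[|?]] ?]; rewrite !mxE //=.

Lemma smx_mxM (A B : smx) : smx_mx A * smx_mx B = smx_mx (smx_mul A B).
Proof.
apply/matrixP => i j; rewrite !mxE !big_ord_recl big_ord0 addr0 !mxE /=.
by case: i j => [[|[|i]] Hi] [[|[|j]] Hj] //=; rewrite !lmul_smxM lmul_smxD.
Qed.

Lemma smx_mxD (A B : smx) : smx_mx A + smx_mx B = smx_mx (smx_add A B).
Proof. by entrywise; rewrite lmul_smxD. Qed.

Lemma smx_mxN (A : smx) : - smx_mx A = smx_mx (smx_opp A).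
Proof. by entrywise; rewrite lmul_smxN. Qed.

Lemma smx_mx1 : smx_mx smx1 = 1.
Proof. by entrywise; rewrite ?lmul_smx_const ?lmul_smx0. Qed.

Lemma smx_mx_pow (A : smx) n : smx_mx (smx_pow A n) = smx_mx A ^+ n.
Proof. by elim: n => [|n IH]; rewrite ?smx_mx1 // exprSr -IH smx_mxM. Qed.

Lemma smx_mx_comm (A B : smx) :
  smx_mx A * smx_mx B - smx_mx B * smx_mx A = smx_mx (smx_comm A B).
Proof. by rewrite !smx_mxM smx_mxN smx_mxD. Qed.

Lemma smx_mxZ (c : R) (A : smx) : scal2 c * smx_mx A = smx_mx (smx_scale c A).
Proof. by rewrite /scal2 -mulmxE mul_scalar_mx; entrywise; rewrite lmul_smxZ. Qed.

Lemma smx_mx0 : smx_mx smx0 = 0.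
Proof. by entrywise; rewrite lmul_smx0. Qed.

Lemma smx_eqv_mx (A B : smx) : smx_eqv A B -> smx_mx A = smx_mx B.
Proof.
move=> /all_gmonosP AB; entrywise; apply: eq_lmul_mx => a; rewrite /dense; by case: (AB a).
Qed.

Lemma smx_mx_inj01 (A B : smx) : smx_mx A = smx_mx B -> forall a, oval (s01 A a) = oval (s01 B a).
Proof. by move=> /matrixP /(_ ord0 (lift ord0 ord0)); rewrite !mxE => /lmul_mx_inj. Qed.

End Sparse.

Definition gy1 : gmono := (true, false, false, false).
Definition gy2 : gmono := (false, true, false, false).
Definition gy1' : gmono := (false, false, true, false).
Definition gy2' : gmono := (false, false, false, true).

Section Generators.
Variables (R : comNzRingType) (x1 x2 x1' x2' : R).

Definition sgen (b : bool) : smx R :=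
  if b then Smx (sgrass_of [:: (g0, x2)]) (sgrass_of [:: (gy2, 1)])
                (sgrass_of [:: (gy2', 1)]) (sgrass_of [:: (g0, x2')])
  else Smx (sgrass_of [:: (g0, x1)]) (sgrass_of [:: (gy1, 1)])
           (sgrass_of [:: (gy1', 1)]) (sgrass_of [:: (g0, x1')]).

Definition delta (b : bool) : R := if b then x2 - x2' else x1 - x1'.

Definition wvec (c : R) (ya yb : gmono) : sgrass R :=
  sgrass_of [:: (ya, c * delta true); (yb, - (c * delta false))].

(* Closed forms of [C1, C2] (t = None) and of [C1, C2, C_k] (t = Some k). *)
Definition sbracket (t : option bool) : smx R :=
  if t is Some k then
    let D := if k then sgrass_of [:: (gunion gy2 gy1', - delta true);
                                     (gunion gy1 gy2', - delta true);
                                     (gunion gy2 gy2', 2 * delta false)]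
             else sgrass_of [:: (gunion gy1 gy1', - (2 * delta true));
                                (gunion gy2 gy1', delta false);
                                (gunion gy1 gy2', delta false)] in
    Smx D (wvec (delta k) gy1 gy2) (wvec (delta k) gy1' gy2') D
  else
    let D := sgrass_of [:: (gunion gy1 gy2', 1); (gunion gy2 gy1', -1)] in
    Smx D (wvec (-1) gy1 gy2) (wvec 1 gy1' gy2') D.

End Generators.

Ltac smx_unfold :=
  lazy beta iota zeta delta [sgen delta wvec sbracket gy1 gy2 gy1' gy2' g0 gunion
    smx_eqv all_gmonos smx_comm smx_add smx_opp smx_mul smx_scale smx0 smx1 s00 s01 s10 s11
    dense sgrass_add sgrass_opp sgrass_scale sgrass_mul sgrass_of oadd omul oopp osign oval
    gmonos gsubset gdiff gsign gmono_eqb foldr implb andb orb negb addb Bool.eqb fst snd].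

Ltac smx_compute := smx_unfold; repeat split; ring.

Section BracketIdentities.
Variables (R : comNzRingType) (x1 x2 x1' x2' : R).
Local Notation sgen := (sgen x1 x2 x1' x2').
Local Notation delta := (delta x1 x2 x1' x2').
Local Notation sbracket := (sbracket x1 x2 x1' x2').

Lemma sbracket0 : smx_eqv (smx_comm (sgen false) (sgen true)) (sbracket None).
Proof. by smx_compute. Qed.

Lemma sbracket1 k : smx_eqv (smx_comm (sbracket None) (sgen k)) (sbracket (Some k)).
Proof. by case: k; smx_compute. Qed.

Lemma sbracket2 j k :
  smx_eqv (smx_comm (sbracket (Some j)) (sgen k)) (smx_scale (delta j * delta k) (sbracket None)).
Proof. by case: j; case: k; smx_compute. Qed.

Lemma sbracket_pair_comm t t' k :
  smx_eqv (smx_comm (smx_mul (sbracket t) (sbracket t')) (sgen k)) (smx0 R).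
Proof. by case: t => [[]|]; case: t' => [[]|]; case: k; smx_compute. Qed.

Lemma sbracket_triple t t' t'' :
  smx_eqv (smx_mul (smx_mul (sbracket t) (sbracket t')) (sbracket t'')) (smx0 R).
Proof. by case: t => [[]|]; case: t' => [[]|]; case: t'' => [[]|]; smx_compute. Qed.

End BracketIdentities.

Section RingCommutators.
Variable T : nzRingType.
Implicit Types a b c X W : T.

Lemma comm_eq0 a b : comm a b = 0 <-> GRing.comm a b.
Proof. by rewrite /comm; split => [/eqP|->]; rewrite ?subrr // subr_eq0 => /eqP. Qed.

Lemma commC a b : comm b a = - comm a b.
Proof. by rewrite /comm opprB. Qed.

Lemma commMl a b c : comm (a * b) c = a * comm b c + comm a c * b.
Proof. by rewrite /comm mulrBr mulrBl !mulrA addrA subrK. Qed.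

Lemma comm_commr X a b : GRing.comm X a -> GRing.comm X b -> GRing.comm X (comm a b).
Proof. by move=> Xa Xb; apply: commrB; apply: commrM. Qed.

Lemma commMl_ann X a b c : GRing.comm X b ->
  comm a c * X = 0 -> comm b c * X = 0 -> comm (a * b) c * X = 0.
Proof. by move=> Xb ac bc; rewrite commMl mulrDl -!mulrA bc -Xb mulrA ac mulr0 mul0r addr0. Qed.

Lemma commXl_ann X a c n : GRing.comm X a -> comm a c * X = 0 -> comm (a ^+ n) c * X = 0.
Proof.
move=> Xa ac; elim: n => [|n IH]; first by rewrite expr0 /comm mul1r mulr1 subrr mul0r.
by rewrite exprS commMl_ann //; apply: commrX.
Qed.

Lemma comm_mul_ann W X c : GRing.comm X c -> comm W c * X = 0 -> GRing.comm (W * X) c.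
Proof.
move=> Xc; rewrite /comm mulrBl => /eqP; rewrite subr_eq0 => /eqP WcX.
by rewrite /GRing.comm -mulrA Xc mulrA WcX mulrA.
Qed.

Lemma comm_central_mull s a b : GRing.comm s b -> comm (s * a) b = s * comm a b.
Proof. by move=> sb; rewrite /comm mulrBr !mulrA -sb. Qed.

End RingCommutators.

Section LeftNormedCommutators.
Variables (T : nzRingType) (g : bool -> T).

Definition lcommr (js : seq bool) : T :=
  foldl (fun a b => comm a (g b)) (comm (g false) (g true)) js.

Lemma lcommr_rcons js j : lcommr (rcons js j) = comm (lcommr js) (g j).
Proof. by rewrite /lcommr foldl_rcons. Qed.

Lemma comm_lcommr X : (forall b, GRing.comm X (g b)) -> forall js, GRing.comm X (lcommr js).
Proof.
move=> Xg; elim/last_ind => [|js j IH]; first exact: comm_commr.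
by rewrite lcommr_rcons; apply: comm_commr.
Qed.

Definition nullcentral (X : T) : Prop :=
  (forall b, GRing.comm X (g b)) /\ forall js, lcommr js * X = 0.

Lemma nullcentral0 : nullcentral 0.
Proof. by split=> [b|js]; [exact: commr_sym (commr0 _) | rewrite mulr0]. Qed.

Lemma nullcentralM X Y : nullcentral X -> nullcentral Y -> nullcentral (X * Y).
Proof.
move=> [Xg X0] [Yg _]; split=> [b|js]; last by rewrite mulrA X0 mul0r.
by apply/commr_sym/commrM; apply/commr_sym.
Qed.

Lemma nullcentral_gens X b c : nullcentral X -> comm (g b) (g c) * X = 0.
Proof.
move=> [_ /(_ [::]) X0]; case: b; case: c; rewrite ?[comm _ _]subrr ?mul0r //.
by rewrite commC mulNr X0 oppr0.
Qed.

Lemma nullcentral_monomial X n m b :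
  nullcentral X -> GRing.comm (g false ^+ n * g true ^+ m * X) (g b).
Proof.
move=> nX; have [Xg _] := nX; apply: comm_mul_ann => //.
by apply: commMl_ann; [apply: commrX | apply: commXl_ann; rewrite ?nullcentral_gens..].
Qed.

Hypothesis lcommr_pair_comm : forall js js' b, GRing.comm (lcommr js * lcommr js') (g b).
Hypothesis lcommr_triple : forall js js' js'', lcommr js'' * (lcommr js * lcommr js') = 0.

(* [level l X] is what is remembered of a product X of l commutators. *)
Definition level (l : nat) (X : T) : Prop :=
  match l with 0 => X = 1 | 1 => exists js, X = lcommr js | _ => nullcentral X end.

Lemma levelM l1 l2 X Y : level l1 X -> level l2 Y -> level (l1 + l2) (X * Y).
Proof.
have pair js js' : nullcentral (lcommr js * lcommr js') by split.
case: l1 => [|[|l1]] /= HX; case: l2 => [|[|l2]] /= HY; rewrite ?HX ?HY ?mul1r ?mulr1 //.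
- by case: HX => js ->; case: HY => js' ->.
- by case: HX => js ->; case: HY => _ ->; apply: nullcentral0.
- case: HY => js ->; have [Xg X0] := HX.
  by rewrite (comm_lcommr Xg) X0; apply: nullcentral0.
- exact: nullcentralM.
Qed.

Lemma level_prod (us : seq (seq bool * nat)) :
  level (\sum_(p <- us) p.2) (\prod_(p <- us) lcommr p.1 ^+ p.2).
Proof.
elim: us => [|[js k] us IH]; rewrite ?big_nil ?big_cons //=.
apply: levelM IH; elim: k => [|k IHk]; rewrite ?expr0 // exprS.
by apply: (levelM (l1 := 1)) IHk; exists js.
Qed.

End LeftNormedCommutators.

Definition ybasis (i : nat) : gmono := (i == 0, i == 1, i == 2, i == 3)%N.

Lemma lmul_coef_basis (R : comNzRingType) (m a b : gmono) :
  lmul_coef (dense (sgrass_of [:: (m, 1 : R)])) a b =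
  if gsubset b a && gmono_eqb (gdiff a b) m then negif (gsign (gdiff a b) b) 1 else 0.
Proof.
rewrite /lmul_coef /dense /=; case: (gsubset b a) => //=.
by case: (gmono_eqb _ m); rewrite /negif ?oppr0 ?if_same.
Qed.

Definition yv_hit (i : 'I_4) (a b : 'I_16) : bool := (~~ bitI b i) && (a == b + 2 ^ i :> nat).

(* Unlike [inord], whose value is decided by an opaque proof, this reduces
   under [vm_compute]. *)
Definition ord_mod n (a : nat) : 'I_n.+1 := Ordinal (ltn_pmod a (ltn0Sn n)).

Lemma ord_modE n (a : 'I_n.+1) : ord_mod n a = a.
Proof. by apply: val_inj; rewrite /= modn_small. Qed.

Lemma yv_table : all (fun i => all (fun a => all (fun b =>
    let i := ord_mod 3 i in let a := ord_mod 15 a in let b := ord_mod 15 b in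
    (yv_hit i a b ==
       gsubset (gmono_of_nat b) (gmono_of_nat a) &&
       gmono_eqb (gdiff (gmono_of_nat a) (gmono_of_nat b)) (ybasis i)) &&
    (yv_hit i a b ==> (odd (count (fun j => bitI b j) (iota 0 i)) ==
       gsign (gdiff (gmono_of_nat a) (gmono_of_nat b)) (gmono_of_nat b))))
  (iota 0 16)) (iota 0 16)) (iota 0 4).
Proof. by vm_compute. Qed.

Lemma yvE (K : fieldType) (i : 'I_4) : yv K i = lmul_smx (sgrass_of [:: (ybasis i, 1)]).
Proof.
apply/matrixP => a b; rewrite !mxE lmul_coef_basis.
have mem_iota_ord n (k : 'I_n) : (k : nat) \in iota 0 n by rewrite mem_iota ltn_ord.
move: yv_table => /allP/(_ i (mem_iota_ord _ i))/allP/(_ a (mem_iota_ord _ a)).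
move=> /allP/(_ b (mem_iota_ord _ b)); rewrite !ord_modE => /andP[/eqP hitE /implyP sgnE].
rewrite -/(yv_hit i a b) hitE; case: ifP => // hit; rewrite -hitE in hit.
by rewrite -signr_odd (eqP (sgnE hit)) /negif; case: gsign; rewrite ?expr1 ?expr0.
Qed.

Section Realization.
Variable K : fieldType.
Local Notation M2 := 'M[SA K]_2.

Definition xvar (k : nat) : KX K := 'X_(inord k).

Definition sgenK := sgen (xvar 0) (xvar 1) (xvar 2) (xvar 3).

Definition sbracketK := sbracket (xvar 0) (xvar 1) (xvar 2) (xvar 3).

Lemma CgenE b : Cgen K b = smx_mx (sgenK b).
Proof.
apply/matrixP => p q; rewrite !mxE; case: b;
  case: p q => [[|[|p]] Hp] [[|[|q]] Hq] //=; rewrite /xv ?yvE ?lmul_smx_const //=;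
  by rewrite /ybasis inordK.
Qed.

Lemma lcomm_eq0 js : lcomm K js = lcommr (Cgen K) js.
Proof. by []. Qed.

Definition xspec (i : 'I_4) : K := if (i < 2)%N then 1 else 0.

Lemma meval_xvar k : (k < 4)%N -> meval xspec (xvar k) = if (k < 2)%N then 1 else 0.
Proof. by move=> k4; rewrite mevalXU /xspec inordK. Qed.

Lemma meval_delta b : meval xspec (delta (xvar 0) (xvar 1) (xvar 2) (xvar 3) b) = 1.
Proof. by case: b; rewrite /delta mevalB !meval_xvar // subr0. Qed.

Lemma lcomm_shape js :
  exists c t, lcomm K js = scal2 c * smx_mx (sbracketK t) /\ meval xspec c = 1.
Proof.
elim/last_ind: js => [|js j [c [t [IH c1]]]].
  exists 1, None; rewrite meval1 scal2_1 mul1r; split=> //.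
  by rewrite /lcomm /= /comm /C1 /C2 !CgenE smx_mx_comm (smx_eqv_mx (sbracket0 _ _ _ _)).
rewrite lcomm_eq0 lcommr_rcons -lcomm_eq0 IH CgenE comm_central_mull; last exact: scal2_comm.
rewrite /comm smx_mx_comm; case: t {IH} => [k|].
- rewrite (smx_eqv_mx (sbracket2 _ _ _ _ k j)) -smx_mxZ mulrA scal2M.
  by eexists _, None; split; first reflexivity; rewrite !mevalM c1 !meval_delta !mulr1.
- by rewrite (smx_eqv_mx (sbracket1 _ _ _ _ j)); exists c, (Some j).
Qed.

Lemma lcomm_pair_comm js js' b : GRing.comm (lcomm K js * lcomm K js') (Cgen K b).
Proof.
have [c [t [-> _]]] := lcomm_shape js; have [d [t' [-> _]]] := lcomm_shape js'.
apply/comm_eq0; rewrite scal2_mulmx comm_central_mull; last exact: scal2_comm.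
rewrite CgenE /comm smx_mxM smx_mx_comm (smx_eqv_mx (sbracket_pair_comm _ _ _ _ t t' b)).
by rewrite smx_mx0 mulr0.
Qed.

Lemma lcomm_triple js js' js'' : lcomm K js'' * (lcomm K js * lcomm K js') = 0.
Proof.
have [c [t [-> _]]] := lcomm_shape js; have [d [t' [-> _]]] := lcomm_shape js'.
have [e [t'' [-> _]]] := lcomm_shape js''.
rewrite [X in _ * X]scal2_mulmx scal2_mulmx (mulrA (smx_mx _)) !smx_mxM.
by rewrite (smx_eqv_mx (sbracket_triple _ _ _ _ t'' t t')) smx_mx0 mulr0.
Qed.

Lemma centralF_gens (f : M2) : centralF f <-> forall b, GRing.comm f (Cgen K b).
Proof.
split=> [fc b | fg g [s ->]].
  apply: fc; exists [:: (1, [:: b])].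
  by rewrite big_cons big_nil addr0 big_cons big_nil mulr1 /scal mpolyC1 mul1r.
apply: commr_sum => p _; apply: commrM; first exact: esym (scal2_comm _ _).
exact: commr_prod.
Qed.

End Realization.

Definition glow (a : gmono) : bool :=
  let '(a0, a1, a2, a3) := a in (a0 + a1 + a2 + a3 <= 1)%N.

Definition sgrass_low (R S : comNzRingType) (f : R -> S) (u : sgrass R) (v : sgrass S) : Prop :=
  forall a, glow a -> f (dense u a) = dense v a.

Definition smx_low (R S : comNzRingType) (f : R -> S) (A : smx R) (B : smx S) : Prop :=
  [/\ sgrass_low f (s00 A) (s00 B), sgrass_low f (s01 A) (s01 B),
      sgrass_low f (s10 A) (s10 B) & sgrass_low f (s11 A) (s11 B)].

Lemma smx_low_trans (R S : comNzRingType) (f : R -> S) A B C :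
  smx_low f A B -> smx_low id B C -> smx_low f A C.
Proof.
by case=> h00 h01 h10 h11 [k00 k01 k10 k11]; split=> a la;
  rewrite ?h00 ?h01 ?h10 ?h11 ?k00 ?k01 ?k10 ?k11.
Qed.

Ltac low_entries := split=> -[[[[] []] []] []]; rewrite [glow _]/= => // _; smx_unfold.

Section LowDegreeMorphism.
Variables (R S : comNzRingType) (f : {rmorphism R -> S}).

Lemma grass_mul_low (u v : grass R) (u' v' : grass S) :
  (forall a, glow a -> f (u a) = u' a) -> (forall a, glow a -> f (v a) = v' a) ->
  forall a, glow a -> f (grass_mul u v a) = grass_mul u' v' a.
Proof.
move=> uu vv [[[[] []] []] []]; rewrite /glow //= => _;
lazy beta iota zeta delta [grass_mul gsum negif gmonos gsubset gdiff gsign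
  foldr implb andb negb addb];
by rewrite ?(rmorphD, rmorphM, rmorphN, rmorph0) ?uu ?vv.
Qed.

Lemma sgrass_low_add u u' v v' : sgrass_low f u u' -> sgrass_low f v v' ->
  sgrass_low f (sgrass_add u v) (sgrass_add u' v').
Proof. by move=> uu vv a la; rewrite /dense !oval_add rmorphD -!/(dense _ _) uu ?vv. Qed.

Lemma sgrass_low_mul u u' v v' : sgrass_low f u u' -> sgrass_low f v v' ->
  sgrass_low f (sgrass_mul u v) (sgrass_mul u' v').
Proof. by move=> uu vv a la; rewrite !dense_mul; apply: grass_mul_low. Qed.

Lemma sgrass_low_opp u u' : sgrass_low f u u' -> sgrass_low f (sgrass_opp u) (sgrass_opp u').
Proof. by move=> uu a la; rewrite /dense !oval_opp rmorphN -!/(dense _ _) uu. Qed.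

Lemma smx_low_mul A A' B B' : smx_low f A A' -> smx_low f B B' ->
  smx_low f (smx_mul A B) (smx_mul A' B').
Proof.
by case=> ? ? ? ? [? ? ? ?]; split; apply: sgrass_low_add; apply: sgrass_low_mul.
Qed.

Lemma smx_low_comm A A' B B' : smx_low f A A' -> smx_low f B B' ->
  smx_low f (smx_comm A B) (smx_comm A' B').
Proof.
move=> AA BB; have [? ? ? ?] := smx_low_mul AA BB; have [? ? ? ?] := smx_low_mul BB AA.
by split; apply: sgrass_low_add => //; apply: sgrass_low_opp.
Qed.

End LowDegreeMorphism.

Section Specialization.
Variable K : fieldType.
Local Notation ev := (meval (xspec K)).

Definition sgen1 : bool -> smx K := sgen 1 1 0 0.

Definition spow (n : nat) (A : smx K) : smx K := if n is 0 then smx1 K else A.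

Lemma smx_low_sgen b : smx_low ev (sgenK K b) (sgen1 b).
Proof.
by case: b; rewrite /sgenK /sgen1; low_entries; rewrite ?meval_xvar ?meval0 ?meval1.
Qed.

Lemma smx_low1 : smx_low ev (smx1 _) (smx1 K).
Proof. by low_entries; rewrite ?meval0 ?meval1. Qed.

(* Modulo Grassmann degree 2, each specialized generator is idempotent. *)
Lemma sgen1_idem_low n b : smx_low id (smx_mul (spow n (sgen1 b)) (sgen1 b)) (sgen1 b).
Proof. by case: n => [|n]; case: b; rewrite /spow /sgen1; low_entries; ring. Qed.

Lemma smx_low_pow b n : smx_low ev (smx_pow (sgenK K b) n) (spow n (sgen1 b)).
Proof.
elim: n => [|n IH]; first exact: smx_low1.
exact: smx_low_trans (smx_low_mul IH (smx_low_sgen b)) (sgen1_idem_low n b).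
Qed.

Lemma smx_low_sbracket t : smx_low ev (sbracketK K t) (sbracket (1 : K) 1 0 0 t).
Proof.
case: t => [[]|]; low_entries;
  rewrite ?(mevalD, mevalB, mevalM, mevalN, meval0, meval1, rmorph_nat) ?meval_xvar //=; ring.
Qed.

Definition sword1 n m (G : smx K) : smx K :=
  smx_mul (smx_mul (spow n (sgen1 false)) (spow m (sgen1 true))) G.

(* The coefficients computed below are +-1, so [ring] can certify them
   uniformly through v * v = 1. *)
Lemma sqr1_neq0 (v : K) : v * v = 1 -> v != 0.
Proof. by move=> v2; apply: contra_eq_neq v2 => ->; rewrite mul0r eq_sym oner_eq0. Qed.

(* A pure power of C1 fails to commute with C2, any other monomial with C1. *)
Lemma sword1_gen_noncomm n m : (n + m != 0)%N ->
  oval (s01 (smx_comm (sword1 n m (smx1 K)) (sgen1 ((n != 0) && (m == 0)))) gy1) != 0.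
Proof.
by case: n => [|n]; case: m => [|m] //= _; apply: sqr1_neq0;
  rewrite /sword1 /spow /sgen1; smx_unfold; ring.
Qed.

Lemma sword1_bracket_noncomm n m t :
  oval (s01 (smx_comm (sword1 n m (sbracket 1 1 0 0 t)) (sgen1 false)) gy1) != 0.
Proof.
by case: n => [|n]; case: m => [|m]; case: t => [[]|]; apply: sqr1_neq0;
  rewrite /sword1 /spow /sgen1; smx_unfold; ring.
Qed.

Lemma noncomm_transfer n m c (G : smx (KX K)) (G1 : smx K) k :
  ev c = 1 -> smx_low ev G G1 ->
  oval (s01 (smx_comm (sword1 n m G1) (sgen1 k)) gy1) != 0 ->
  ~ GRing.comm (C1 K ^+ n * C2 K ^+ m * (scal2 c * smx_mx G)) (Cgen K k).
Proof.
move=> c1 GG1 nz /comm_eq0.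
pose W := smx_mul (smx_mul (smx_pow (sgenK K false) n) (smx_pow (sgenK K true) m)) G.
have -> : C1 K ^+ n * C2 K ^+ m * (scal2 c * smx_mx G) = scal2 c * smx_mx W.
  by rewrite mulrA -scal2_comm -mulrA /C1 /C2 !CgenE -!smx_mx_pow !smx_mxM.
rewrite comm_central_mull; last exact: scal2_comm.
rewrite CgenE /comm smx_mx_comm smx_mxZ -smx_mx0 => /smx_mx_inj01 /(_ gy1) /=.
rewrite oval_mul /= => /(congr1 ev); rewrite mevalM c1 mul1r meval0.
have WG1 : smx_low ev W (sword1 n m G1).
  by apply: smx_low_mul GG1; apply: smx_low_mul; apply: smx_low_pow.
have [_ h01 _ _] := smx_low_comm WG1 (smx_low_sgen k).
by rewrite [LHS]h01 // => /eqP; apply/negP.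
Qed.

End Specialization.

Lemma monomial_central (K : fieldType) n m :
  (forall b, GRing.comm (C1 K ^+ n * C2 K ^+ m) (Cgen K b)) -> n = 0%N /\ m = 0%N.
Proof.
move=> central; suff /eqP : (n + m == 0)%N by case: n m {central} => [|?] [|?].
apply/negPn/negP => nm0.
have := noncomm_transfer (meval1 _) (smx_low1 K) (sword1_gen_noncomm K nm0).
by rewrite scal2_1 smx_mx1 mul1r mulr1; apply.
Qed.

Lemma monomial_lcomm_noncentral (K : fieldType) n m js :
  ~ (forall b, GRing.comm (C1 K ^+ n * C2 K ^+ m * lcomm K js) (Cgen K b)).
Proof.
have [c [t [-> c1]]] := lcomm_shape K js.
move=> /(_ false); apply: noncomm_transfer c1 (smx_low_sbracket K t) _.
exact: sword1_bracket_noncomm.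
Qed.

Theorem proposition2 (K : fieldType)
  (K_infinite : forall s : seq K, exists x : K, x \notin s)
  (K_char : (2%:R : K) != 0)
  (n m : nat) (us : seq (seq bool * nat)) :
  centralF (C1 K ^+ n * C2 K ^+ m * \prod_(p <- us) lcomm K p.1 ^+ p.2)
  <-> ((2 <= \sum_(p <- us) p.2)%N
       \/ (n = 0%N /\ m = 0%N /\ all (fun p => p.2 == 0%N) us)).
Proof.
rewrite centralF_gens -[all _ us](sum_nat_seq_eq0 us xpredT).
have := level_prod (@lcomm_pair_comm K) (@lcomm_triple K) us.
case: (\sum_(p <- us) p.2)%N => [|[|l]] /= level_us.
- rewrite level_us mulr1.
  split=> [/monomial_central [-> ->] | [/notF[] | [-> [-> _]] b]]; first by right.
  by rewrite !expr0 mulr1; apply: commr_sym; apply: commr1.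
- have [js ->] := level_us.
  by split=> [/monomial_lcomm_noncentral [] | [/notF[] | [_ [_ /notF[]]]]].
- by split=> [_|_ b]; [left | apply: nullcentral_monomial].
Qed.
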